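(* Let $F=\{f_1,\dots,f_m\}$ be an IFS of contracting similitudes of $\mathbb{R}^d$ with attractor $A$. (a) If $h\in\mathcal{N}$, then $f_k^{-1}\circ h\circ f_j\in\mathcal{N}$ for all $j,k\in\{1,\dots,m\}$. (b) With $K=\bigcup_{h\in\mathcal{N}}h(A)$, one has $K\subseteq f_k(K)$ for each $k$. (c) $f_k(U_1)\subseteq U_1$ for each $k=1,\dots,m$.
   Context: $F^0=\{\mathrm{id}\}$, $F^k$ is the set of maps $f_{i_1}\circ\cdots\circ f_{i_k}$, $F^*=\bigcup_{k\ge0}F^k$; a piece of $A$ is $f'(A)$ with $f'\in F^*$. $\mathcal{N}$ is the set of all maps $h=f^{-1}g$ with $f,g\in F^*$ (of arbitrary lengths) such that $h(A)$ contains no piece of $A$. $d(x,E)=\inf\{|x-y|:y\in E\}$, and $U_1=\{x\in\mathbb{R}^d: d(x,A)<\inf_{h\in\mathcal{N}} d(x,h(A))\}$ (infimum over the empty set is $+\infty$). *)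

From HB Require Import structures.
From mathcomp Require Import all_boot all_order all_algebra.
From mathcomp Require Import all_classical all_reals all_analysis.
Set Implicit Arguments. Unset Strict Implicit. Unset Printing Implicit Defensive.
Import Order.TTheory GRing.Theory Num.Theory.
Import numFieldNormedType.Exports.
Local Open Scope classical_set_scope.
Local Open Scope ring_scope.

Section IFSDefs.
Variables (R : realType) (d : nat).
Notation V := 'rV[R]_d.

Definition enorm (x : V) : R := Num.sqrt (\sum_(i < d) (x ord0 i) ^+ 2).

Definition edist (x y : V) : R := enorm (x - y).

Definition contracting_similitude (f : V -> V) : Prop :=
  exists r : R, 0 < r < 1 /\ forall x y, edist (f x) (f y) = r * edist x y.

(* inverse map (f is a bijection of R^d when it is a similitude) *)
Definition sim_inv (f : V -> V) (y : V) : V := xget 0 [set x | f x = y].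

Variable m : nat.
Variable F : 'I_m -> (V -> V).
Variable A : set V.

Definition comp_word (s : seq 'I_m) : V -> V := foldr (fun i g => F i \o g) id s.
Definition Fstar : set (V -> V) := [set g | exists s : seq 'I_m, g = comp_word s].

Definition piece : set (set V) := [set P | exists2 g, Fstar g & P = g @` A].

Definition Nset : set (V -> V) :=
  [set h | (exists f, exists g, [/\ Fstar f, Fstar g & h = sim_inv f \o g]) /\
           ~ (exists2 P, piece P & P `<=` h @` A)].

(* d(x,E) as an extended real (inf over the empty set is +oo) *)
Definition dist_set (x : V) (E : set V) : \bar R :=
  ereal_inf [set (edist x y)%:E | y in E].

Definition U1 : set V :=
  [set x | (dist_set x A < ereal_inf [set dist_set x (h @` A) | h in Nset])%E].

Definition Kset : set V := \bigcup_(h in Nset) (h @` A).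

End IFSDefs.

(* (a) If [h(A)] contains no piece [g(A)], then neither does [f_k^-1 h f_j (A)]: otherwise
   [f_k g (A)] would be a piece inside [h(f_j A)], which lies in [h(A)] since [f_j A] lies in [A].
   (b) Since [A] is the union of the [f_j A], every point [h(f_j a)] of [K] is [f_k] of a point of
   [(f_k^-1 h f_j)(A)], which lies in [K] by (a).
   (c) If [f_k] has ratio [r], distances to [f_k]-images scale by [r], and [f_k A] lies in [A], so
   [d(f_k x, A) <= r d(x, A) < r inf_N d(x, h'(A))], while by (b) every point of a set [h(A)],
   [h] in [N], is [f_k] of a point of some [h'(A)] with [h'] in [N].
   Surjectivity of similitudes, needed for [f_k^-1], holds because [x |-> f x - f 0] preserves the
   inner product up to the factor [r^2], hence is an invertible linear map. *)
From Pilot Require Import Defs.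
From HB Require Import structures.
From mathcomp Require Import all_boot all_order all_algebra.
From mathcomp Require Import all_classical all_reals all_analysis.
From mathcomp Require Import ring lra.
Import Order.TTheory GRing.Theory Num.Theory.
Import numFieldNormedType.Exports.
Local Open Scope classical_set_scope.
Local Open Scope ring_scope.
Set Implicit Arguments. Unset Strict Implicit. Unset Printing Implicit Defensive.

Section InnerProduct.
Variables (R : realType) (d : nat).
Implicit Types (x y z : 'rV[R]_d) (a : R).

Definition dot x y : R := \sum_(i < d) x ord0 i * y ord0 i.

Lemma dotC x y : dot x y = dot y x.
Proof. by apply: eq_bigr => i _; rewrite mulrC. Qed.

Lemma dotDl x y z : dot (x + y) z = dot x z + dot y z.
Proof. by rewrite /dot -big_split; apply: eq_bigr => i _; rewrite !mxE mulrDl. Qed.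

Lemma dotZl a x z : dot (a *: x) z = a * dot x z.
Proof. by rewrite /dot mulr_sumr; apply: eq_bigr => i _; rewrite !mxE mulrA. Qed.

Lemma dotNl x z : dot (- x) z = - dot x z.
Proof. by rewrite -scaleN1r dotZl mulN1r. Qed.

Lemma dotBl x y z : dot (x - y) z = dot x z - dot y z.
Proof. by rewrite dotDl dotNl. Qed.

Lemma dotDr x y z : dot z (x + y) = dot z x + dot z y.
Proof. by rewrite dotC dotDl dotC (dotC y). Qed.

Lemma dotBr x y z : dot z (x - y) = dot z x - dot z y.
Proof. by rewrite dotC dotBl dotC (dotC y). Qed.

Lemma dotZr a x z : dot z (a *: x) = a * dot z x.
Proof. by rewrite dotC dotZl dotC. Qed.

Lemma dot0r x : dot x 0 = 0.
Proof. by rewrite -(scale0r 0) dotZr mul0r. Qed.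

Lemma dotvv_ge0 x : 0 <= dot x x.
Proof. by apply: sumr_ge0 => i _; rewrite -expr2 sqr_ge0. Qed.

Lemma dotvv_eq0 x : dot x x = 0 -> x = 0.
Proof.
move=> x0; apply/rowP => i; rewrite mxE.
have sq_ge0 (j : 'I_d) : true -> 0 <= x ord0 j * x ord0 j by rewrite -expr2 sqr_ge0.
by move: (psumr_eq0P sq_ge0 x0 (i := i) isT) => /eqP; rewrite mulf_eq0 orbb => /eqP.
Qed.

Lemma enorm_sqr x : enorm x ^+ 2 = dot x x.
Proof. by rewrite sqr_sqrtr // -/(dot x x) dotvv_ge0. Qed.

(* The squared norm of [g (a x + y) - a g x - g y] is [c] times that of [(a x + y) - a x - y]. *)
Lemma dot_scaled_linear (g : 'rV[R]_d -> 'rV[R]_d) (c : R) :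
  (forall x y, dot (g x) (g y) = c * dot x y) ->
  forall a x y, g (a *: x + y) = a *: g x + g y.
Proof.
move=> gdot a x y; apply/eqP; rewrite -subr_eq0; apply/eqP; apply: dotvv_eq0.
rewrite opprD addrA !dotBl !dotBr !dotZl !dotZr !gdot !dotDl !dotDr !dotZl !dotZr.
by rewrite (dotC y x); ring.
Qed.

Lemma linear_row_mx (g : 'rV[R]_d -> 'rV[R]_d) :
  (forall a x y, g (a *: x + y) = a *: g x + g y) -> exists M, forall x, g x = x *m M.
Proof.
move=> glin.
pose gL : {linear 'rV[R]_d -> 'rV[R]_d} := HB.pack g (GRing.isLinear.Build _ _ _ _ g glin).
by exists (lin1_mx gL) => x; rewrite mul_rV_lin1.
Qed.

End InnerProduct.

Section Similitude.
Variables (R : realType) (d : nat).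
Implicit Types (f g : 'rV[R]_d -> 'rV[R]_d).

Lemma sim_invK f : injective f -> cancel f (sim_inv f).
Proof. by move=> finj x; apply: xget_unique => // z /= /finj. Qed.

Lemma sim_invVK f : bijective f -> cancel (sim_inv f) f.
Proof. by move=> [g fK gK] y; rewrite -[y]gK sim_invK //; apply: can_inj fK. Qed.

Lemma sim_inv_comp f g : bijective f -> bijective g ->
  sim_inv (f \o g) =1 sim_inv g \o sim_inv f.
Proof.
move=> fbij gbij y; apply: (bij_inj (bij_comp fbij gbij)).
rewrite sim_invVK; last exact: bij_comp.
by rewrite /= (sim_invVK gbij) (sim_invVK fbij).
Qed.

Lemma similitude_dist_sqr f (r : R) :
  (forall x y, Defs.edist (f x) (f y) = r * Defs.edist x y) ->
  forall x y, dot (f x - f y) (f x - f y) = r ^+ 2 * dot (x - y) (x - y).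
Proof. by move=> fr x y; rewrite -!enorm_sqr -exprMn; congr (_ ^+ 2); apply: fr. Qed.

Lemma similitude_dot f (r : R) :
  (forall x y, Defs.edist (f x) (f y) = r * Defs.edist x y) ->
  forall x y, dot (f x - f 0) (f y - f 0) = r ^+ 2 * dot x y.
Proof.
move=> fr.
have norm_sqr x : dot (f x - f 0) (f x - f 0) = r ^+ 2 * dot x x.
  by rewrite (similitude_dist_sqr fr) subr0.
move=> x y; have := similitude_dist_sqr fr x y.
have -> : f x - f y = (f x - f 0) - (f y - f 0) by rewrite opprB addrA subrK.
move: (norm_sqr x) (norm_sqr y); set u := f x - f 0; set v := f y - f 0 => nx ny.
clearbody u v.
rewrite !dotBl !dotBr nx ny (dotC v u) (dotC y x) => e.
by apply: (mulfI (_ : 2 != 0 :> R)) => //; lra.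
Qed.

Lemma similitude_surjective f (r : R) : 0 < r ->
  (forall x y, Defs.edist (f x) (f y) = r * Defs.edist x y) ->
  forall y, exists x, f x = y.
Proof.
move=> r0 fr.
have fdot := similitude_dot fr.
have [M fM] := linear_row_mx (dot_scaled_linear fdot).
have Munit : M \in unitmx.
  rewrite -row_free_unit; apply: inj_row_free => v.
  rewrite -fM => /(congr1 (fun z => dot z z)); rewrite fdot dot0r => /eqP.
  by rewrite mulf_eq0 expf_eq0 /= gt_eqF //= => /eqP /dotvv_eq0.
move=> y; exists ((y - f 0) *m invmx M).
by have := fM ((y - f 0) *m invmx M); rewrite mulmxKV // => /addIr.
Qed.

Lemma similitude_bij f : contracting_similitude f -> bijective f.
Proof.
move=> [r [/andP [r0 _] fr]].
have finj : injective f.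
  move=> x y fxy; apply/eqP; rewrite -subr_eq0; apply/eqP/dotvv_eq0.
  have := similitude_dist_sqr fr x y; rewrite fxy subrr dot0r => /esym/eqP.
  by rewrite mulf_eq0 expf_eq0 /= gt_eqF //= => /eqP.
apply: (Bijective (sim_invK finj)) => y.
by have [x <-] := similitude_surjective r0 fr y; rewrite sim_invK.
Qed.

End Similitude.

Section Words.
Variables (R : realType) (d m : nat) (F : 'I_m -> ('rV[R]_d -> 'rV[R]_d)).

Lemma comp_word_cat (s t : seq 'I_m) :
  comp_word F (s ++ t) = comp_word F s \o comp_word F t.
Proof. by elim: s => [|i s IHs] //=; rewrite IHs. Qed.

Lemma Fstar_gen i : Fstar F (F i).
Proof. by exists [:: i]. Qed.

Lemma Fstar_comp f g : Fstar F f -> Fstar F g -> Fstar F (f \o g).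
Proof. by move=> [s ->] [t ->]; exists (s ++ t); rewrite comp_word_cat. Qed.

Lemma Fstar_bij f : (forall i, bijective (F i)) -> Fstar F f -> bijective f.
Proof.
move=> Fbij [s ->]; elim: s => [|i s IHs] /=; first by exists id.
exact: bij_comp.
Qed.

End Words.

Section SelfSimilarSet.
Variables (R : realType) (d m : nat) (F : 'I_m -> ('rV[R]_d -> 'rV[R]_d)).
Variable A : set 'rV[R]_d.
Hypothesis Fbij : forall i, bijective (F i).
Hypothesis A_self_similar : A = \bigcup_(i in [set: 'I_m]) (F i @` A).

Lemma self_similar_image_sub j : F j @` A `<=` A.
Proof. by rewrite [X in _ `<=` X]A_self_similar => _ [a Aa <-]; exists j => //; exists a. Qed.

Lemma self_similar_cover a : A a -> exists j, exists2 b, A b & a = F j b.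
Proof. by rewrite {1}A_self_similar => -[j _ [b Ab <-]]; exists j, b. Qed.

Lemma Nset_conj h j k : Nset F A h -> Nset F A (sim_inv (F k) \o h \o F j).
Proof.
move=> [[f [g [Ff Fg ->]]] no_piece]; split.
  exists (f \o F k), (g \o F j); split; [exact: Fstar_comp (Fstar_gen _ _).. |].
  apply: funext => x /=; rewrite sim_inv_comp //; exact: Fstar_bij.
move=> [_ [p Fp ->] p_sub]; apply: no_piece.
exists ((F k \o p) @` A); first by exists (F k \o p) => //; exact: Fstar_comp (Fstar_gen _ _) Fp.
move=> _ [a Aa <-]; have [b Ab e] := p_sub (p a) (ex_intro2 _ _ a Aa erefl).
exists (F j b); first exact: (self_similar_image_sub (ex_intro2 _ _ b Ab erefl)).
by rewrite /= -e sim_invVK.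
Qed.

Lemma Nset_image_cover h k : Nset F A h ->
  h @` A `<=` \bigcup_(j in [set: 'I_m]) (F k @` ((sim_inv (F k) \o h \o F j) @` A)).
Proof.
move=> _ _ [a Aa <-]; have [j [b Ab ->]] := self_similar_cover Aa.
by exists j => //; exists (sim_inv (F k) (h (F j b))); [exists b | rewrite sim_invVK].
Qed.

Lemma Kset_sub_image k : Kset F A `<=` F k @` Kset F A.
Proof.
move=> x [h Nh hAx]; have [j _ [y [b Ab yE] <-]] := Nset_image_cover k Nh hAx.
by exists y => //; exists (sim_inv (F k) \o h \o F j); [exact: Nset_conj | exists b].
Qed.

End SelfSimilarSet.

Section DistanceToSets.
Variables (R : realType) (d : nat).
Implicit Types (x : 'rV[R]_d) (E : set 'rV[R]_d).

Lemma dist_set_le x E y : E y -> (dist_set x E <= (Defs.edist x y)%:E)%E.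
Proof. by move=> Ey; apply: ereal_inf_lbound; exists y. Qed.

Lemma dist_set_ge x E (c : \bar R) :
  (forall y, E y -> (c <= (Defs.edist x y)%:E)%E) -> (c <= dist_set x E)%E.
Proof. by move=> cE; apply: le_ereal_inf_tmp => _ [y Ey <-]; apply: cE. Qed.

Lemma dist_set_sub x E E' : E `<=` E' -> (dist_set x E' <= dist_set x E)%E.
Proof. by move=> EE'; apply: le_ereal_inf => _ [y Ey <-]; exists y => //; apply: EE'. Qed.

Lemma dist_set_image (f : 'rV[R]_d -> 'rV[R]_d) (r : R) x E : 0 < r ->
  (forall x y, Defs.edist (f x) (f y) = r * Defs.edist x y) ->
  dist_set (f x) (f @` E) = (r%:E * dist_set x E)%E.
Proof.
move=> r0 fr; rewrite /dist_set -ereal_inf_pZl //; congr ereal_inf.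
apply/seteqP; split => _ [_ [y Ey <-] <-].
  by exists (Defs.edist x y)%:E; [exists y | rewrite fr].
by exists (f y); [exists y | rewrite fr].
Qed.

End DistanceToSets.

Lemma U1_image (R : realType) d m (F : 'I_m -> ('rV[R]_d -> 'rV[R]_d)) A k :
  (forall i, bijective (F i)) -> A = \bigcup_(i in [set: 'I_m]) (F i @` A) ->
  contracting_similitude (F k) -> F k @` U1 F A `<=` U1 F A.
Proof.
move=> Fbij A_self_similar [r [/andP [r0 _] fr]] _ [x Ux <-].
rewrite /U1 /= in Ux *.
set I := ereal_inf [set dist_set x (h @` A) | h in Nset F A] in Ux.
have rI_le : (r%:E * I <= ereal_inf [set dist_set (F k x) (h @` A) | h in Nset F A])%E.
  apply: le_ereal_inf_tmp => _ [h Nh <-]; apply: dist_set_ge => y hAy.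
  have [j _ [z [b Ab <-] <-]] := Nset_image_cover Fbij A_self_similar k Nh hAy.
  rewrite fr EFinM lee_pmul2l ?lte_fin //.
  have Nhjk := Nset_conj Fbij A_self_similar j k Nh.
  apply: (le_trans (ereal_inf_lbound (ex_intro2 _ _ _ Nhjk erefl))).
  by apply: dist_set_le; exists b.
apply: le_lt_trans (dist_set_sub (F k x) (self_similar_image_sub A_self_similar (j := k))) _.
rewrite (dist_set_image _ _ r0 fr); apply: lt_le_trans rI_le.
by rewrite lte_pmul2l ?lte_fin.
Qed.

Theorem mainTheorem5 (R : realType) (d m : nat) (F : 'I_m -> ('rV[R]_d -> 'rV[R]_d))
  (A : set 'rV[R]_d)
  (HF : forall i, contracting_similitude (F i))
  (HA0 : A !=set0) (HAc : compact A)
  (HAinv : A = \bigcup_(i in [set: 'I_m]) (F i @` A)) :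
  (forall (h : 'rV[R]_d -> 'rV[R]_d) (j k : 'I_m),
      Nset F A h -> Nset F A (fun x => sim_inv (F k) (h (F j x)))) /\
  (forall k : 'I_m, Kset F A `<=` F k @` Kset F A) /\
  (forall k : 'I_m, F k @` U1 F A `<=` U1 F A).
Proof.
have Fbij i : bijective (F i) by apply: similitude_bij.
split; first by move=> h j k; apply: Nset_conj.
split=> k; first exact: Kset_sub_image.
exact: U1_image.
Qed.
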